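(* Let $\mathcal M$ be a structural causal model with discrete variables $C$, binary $X$ (values $x,x'$), discrete $Z$ and binary $Y$ (values $y,y'$), given by structural equations $X=f_X(C,U_X)$, $Z=f_Z(X,C,U_Z)$, $Y=f_Y(Z,C,U_Y)$, where $C,U_X,U_Z,U_Y$ are mutually independent (so $X$ affects $Y$ only through the mediator $Z$, and $C$ is not a descendant of $X$). Fix $c$ with $P(c)>0$ and $\beta,\gamma,\theta,\delta\in\mathbb R$, and let $$f(c)=\beta P(y_x,y'_{x'}\mid c)+\gamma P(y_x,y_{x'}\mid c)+\theta P(y'_x,y'_{x'}\mid c)+\delta P(y_{x'},y'_x\mid c).$$ Define $\sigma=\beta-\gamma-\theta+\delta$, $W=(\gamma-\delta)P(y_x\mid c)+\delta P(y_{x'}\mid c)+\theta P(y'_{x'}\mid c)$, $$L=\max\{0,\ P(y_x\mid c)-P(y_{x'}\mid c),\ P(y\mid c)-P(y_{x'}\mid c),\ P(y_x\mid c)-P(y\mid c)\},$$ $$U=\min\Big\{P(y_x\mid c),\ P(y'_{x'}\mid c),\ P(y,x\mid c)+P(y',x'\mid c),\ P(y_x\mid c)-P(y_{x'}\mid c)+P(y,x'\mid c)+P(y',x\mid c),$$ $$\qquad \sum_z\sum_{z'\ne z}\min\{P(y\mid z,c),P(y'\mid z',c)\}\cdot\min\{P(z\mid x,c),P(z'\mid x',c)\}\Big\},$$ where $z,z'$ range over values of $Z$ (with the conditional probabilities defined). Then $$W+\sigma U\le f(c)\le W+\sigma L\ \text{ if }\sigma<0,\qquad W+\sigma L\le f(c)\le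 W+\sigma U\ \text{ if }\sigma>0.$$
   Context: For a value $x$ of $X$, $Y_x$ denotes the counterfactual variable ''the value $Y$ would take had $X$ been set to $x$''; $y_x$ is the event $Y_x=y$. Unsubscripted probabilities such as $P(y\mid z,c)$, $P(z\mid x,c)$, $P(y,x\mid c)$ are observational. Consistency: $X=x$ implies $Y_x=Y$. *)

From HB Require Import structures.
From mathcomp Require Import all_boot all_order all_algebra.
From mathcomp Require Import all_classical all_reals all_analysis.
Set Implicit Arguments. Unset Strict Implicit. Unset Printing Implicit Defensive.
Import Order.TTheory GRing.Theory Num.Theory.
Local Open Scope classical_set_scope.
Local Open Scope ring_scope.

(* Mutual independence of C, U_X, U_Z, U_Y is encoded by taking the
   joint law of (C, U) to be  pC (x) (PX (x) PZ (x) PY)  (product measure). *)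

Section SCM.
Variables (R : realType) (C Z : finType).
Variables (dX dZ dY : measure_display)
  (TX : measurableType dX) (TZ : measurableType dZ) (TY : measurableType dY).
Variables (pC : C -> R)
  (PX : probability TX R) (PZ : probability TZ R) (PY : probability TY R).
Variables (fX : C -> TX -> bool) (fZ : bool -> C -> TZ -> Z)
  (fY : Z -> C -> TY -> bool).

Definition noise := ((TX * TZ) * TY)%type.

Definition noise_law : set noise -> \bar R := ((PX \x PZ) \x PY)%E.

(* an event is a set of worlds (c, u); we present it as a family indexed by c *)
Definition event := C -> set noise.

Definition Pr (E : event) : R := \sum_(c : C) pC c * fine (noise_law (E c)).

Definition evI (A B : event) : event := fun c => A c `&` B c.

(* conditional probability (ratio; MathComp's convention x / 0 = 0) *)
Definition cPr (A B : event) : R := Pr (evI A B) / Pr B.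

Definition Xv (c : C) (u : noise) : bool := fX c u.1.1.
Definition Zv (c : C) (u : noise) : Z := fZ (Xv c u) c u.1.2.
Definition Yv (c : C) (u : noise) : bool := fY (Zv c u) c u.2.

(* counterfactual Y_x : value of Y had X been set to x *)
Definition Ycf (x : bool) (c : C) (u : noise) : bool := fY (fZ x c u.1.2) c u.2.

Definition evC (c0 : C) : event := fun c _ => c = c0.
Definition evX (x : bool) : event := fun c u => Xv c u = x.
Definition evZ (z : Z) : event := fun c u => Zv c u = z.
Definition evY (y : bool) : event := fun c u => Yv c u = y.
Definition evYcf (x y : bool) : event := fun c u => Ycf x c u = y.

End SCM.

Definition is_pmf (C : finType) (R : realType) (pC : C -> R) : Prop :=
  (forall c, 0 <= pC c) /\ \sum_(c : C) pC c = 1.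

Definition scm_measurable (C Z : finType)
  (dX dZ dY : measure_display)
  (TX : measurableType dX) (TZ : measurableType dZ) (TY : measurableType dY)
  (fX : C -> TX -> bool) (fZ : bool -> C -> TZ -> Z) (fY : Z -> C -> TY -> bool)
  : Prop :=
  (forall c x, measurable [set u | fX c u = x]) /\
  (forall x c z, measurable [set u | fZ x c u = z]) /\
  (forall z c y, measurable [set u | fY z c u = y]).

From HB Require Import structures.
From mathcomp Require Import all_boot all_order all_algebra.
From mathcomp Require Import all_classical all_reals all_analysis.
From mathcomp Require Import lra.
Set Implicit Arguments. Unset Strict Implicit. Unset Printing Implicit Defensive.
Import Order.TTheory GRing.Theory Num.Theory.
Local Open Scope classical_set_scope.
Local Open Scope ring_scope.

(* Each unit is summarized by its
   response type: its treatment X, its pair of potential mediators (Z_x, Z_x')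
   and its outcome response function z |-> Y_z.  These three components are
   functions of the independent noises U_X, U_Z, U_Y, so given c the law of the
   response type is a product of three finite laws, and every (conditional)
   probability of the statement is the [mass] of a predicate on response
   types, or a ratio of two such masses.

   With PNS = P(y_x, y'_x' | c) the proof has three steps:
   - f(c) = W + sigma * PNS, by splitting the counterfactual marginals;
   - every term of L is below PNS and every term of U is above it: all but the
     last follow from pointwise inequalities between indicator functions of
     response types, the last one from the independence of Y_z and
     (Z_x, Z_x'), which bounds the contribution of each pair z != z';
   - an affine map of slope sigma transports L <= PNS <= U. *)

Section FiniteValuedPreimages.
Variables (R : realType) (d : measure_display) (T : measurableType d).
Variables (F : finType) (f : T -> F).
Hypothesis mfiber : forall v, measurable (f @^-1` [set v]).

Lemma preimage_seq_cons (a : F) (s : seq F) :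
  [set u | f u \in a :: s] = f @^-1` [set a] `|` [set u | f u \in s].
Proof.
apply/seteqP; split => u /=; rewrite in_cons; first by case/orP => [/eqP|]; auto.
by case=> [->|->]; rewrite ?eqxx ?orbT.
Qed.

Lemma measurable_preimage_seq (s : seq F) : measurable [set u | f u \in s].
Proof.
elim: s => [|a s IH]; last by rewrite preimage_seq_cons; exact: measurableU.
by rewrite (_ : [set _ | _] = set0) //; apply/seteqP; split => u.
Qed.

Lemma measure_preimage_seq (mu : {measure set T -> \bar R}) (s : seq F) :
  uniq s -> mu [set u | f u \in s] = (\sum_(a <- s) mu (f @^-1` [set a]))%E.
Proof.
elim: s => [_|a s IH /= /andP[a_s s_uniq]].
  by rewrite big_nil (_ : [set _ | _] = set0) ?measure0 //; apply/seteqP; split.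
rewrite big_cons -IH // preimage_seq_cons measureU //.
  exact: measurable_preimage_seq.
by apply/seteqP; split => // u [/= ->]; rewrite (negbTE a_s).
Qed.

Lemma measure_preimage_pred (mu : {measure set T -> \bar R}) (phi : pred F) :
  mu [set u | phi (f u)] = (\sum_(a | phi a) mu (f @^-1` [set a]))%E.
Proof.
rewrite -big_filter -measure_preimage_seq ?filter_uniq ?index_enum_uniq //.
by congr (mu _); apply/seteqP; split => u /=; rewrite mem_filter mem_index_enum andbT.
Qed.

Lemma probability_fibers_sum1 (P : probability T R) :
  \sum_(v : F) fine (P (f @^-1` [set v])) = 1.
Proof.
rewrite sum_fine => [|v _]; last exact: fin_num_measure.
rewrite -measure_preimage_pred.
have -> : [set u | predT (f u)] = setT by apply/seteqP; split.
exact: (congr1 fine (probability_setT P)).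
Qed.
End FiniteValuedPreimages.

Lemma ler_sum_sub (R : numDomainType) (I : finType) (P Q : pred I) (F : I -> R) :
  (forall i, 0 <= F i) -> (forall i, P i -> Q i) ->
  \sum_(i | P i) F i <= \sum_(i | Q i) F i.
Proof.
move=> F_ge0 PQ; rewrite [leLHS]big_mkcond [leRHS]big_mkcond /=.
by apply: ler_sum => i _; case: (boolP (P i)) => [/PQ ->|_]; case: (Q i).
Qed.

Section ResponseTypes.
Variables (R : realType) (C Z : finType).
Variables (dX dZ dY : measure_display)
  (TX : measurableType dX) (TZ : measurableType dZ) (TY : measurableType dY).
Variables (PX : probability TX R) (PZ : probability TZ R) (PY : probability TY R).
Variables (fX : C -> TX -> bool) (fZ : bool -> C -> TZ -> Z)
  (fY : Z -> C -> TY -> bool).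
Hypothesis hmeas : scm_measurable fX fZ fY.
Variables (c : C) (x : bool).

(* The response type of a unit in context c: its treatment X, its potential
   mediators (Z_x, Z_x'), and its outcome response function z |-> Y_z. *)
Definition resp := ((bool * (Z * Z)) * {ffun Z -> bool})%type.

Definition resp_of (u : noise TX TZ TY) : resp :=
  ((fX c u.1.1, (fZ x c u.1.2, fZ (~~ x) c u.1.2)), [ffun z => fY z c u.2]).

Definition fibX (b : bool) : set TX := [set t | fX c t = b].
Definition fibZ (p : Z * Z) : set TZ := [set t | (fZ x c t, fZ (~~ x) c t) = p].
Definition fibY (g : {ffun Z -> bool}) : set TY := [set t | [ffun z => fY z c t] = g].

Definition qX (b : bool) : R := fine (PX (fibX b)).
Definition qZ (p : Z * Z) : R := fine (PZ (fibZ p)).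
Definition qY (g : {ffun Z -> bool}) : R := fine (PY (fibY g)).

(* By independence of the noises, response types have product weights. *)
Definition weight (a : resp) : R := qX a.1.1 * qZ a.1.2 * qY a.2.

Definition mass (phi : pred resp) : R := \sum_(a | phi a) weight a.

Lemma measurable_fibX b : measurable (fibX b).
Proof. by case: hmeas => mX _; exact: mX. Qed.

Lemma measurable_fibZ p : measurable (fibZ p).
Proof.
case: hmeas => _ [mZ _]; case: p => z1 z2.
rewrite (_ : fibZ _ = [set t | fZ x c t = z1] `&` [set t | fZ (~~ x) c t = z2]).
  exact: measurableI.
by apply/seteqP; split => t /=; [case|move=> [<- <-]].
Qed.

Lemma measurable_fibY g : measurable (fibY g).
Proof.
case: hmeas => _ [_ mY].
rewrite (_ : fibY _ = \big[setI/setT]_(z <- index_enum Z) [set t | fY z c t = g z]).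
  by apply: bigsetI_measurable => z _; exact: mY.
apply/seteqP; split => t /=; rewrite -bigcap_seq.
  by move=> <- z _ /=; rewrite ffunE.
by move=> Hg; apply/ffunP => z; rewrite ffunE; apply: Hg; exact: mem_index_enum.
Qed.

Lemma resp_of_fiber a : resp_of @^-1` [set a] = (fibX a.1.1 `*` fibZ a.1.2) `*` fibY a.2.
Proof.
apply/seteqP; split => [u /= <- //|[[u1 u2] u3] /= [[h1 h2] h3]].
by rewrite /resp_of /= h1 h2 h3 -!surjective_pairing.
Qed.

Lemma measurable_resp_fiber a : measurable (resp_of @^-1` [set a]).
Proof.
rewrite resp_of_fiber; apply: measurableX; last exact: measurable_fibY.
by apply: measurableX; [exact: measurable_fibX|exact: measurable_fibZ].
Qed.

Lemma noise_law_resp_fiber a : noise_law PX PZ PY (resp_of @^-1` [set a]) = (weight a)%:E.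
Proof.
have mX := measurable_fibX a.1.1; have mZ := measurable_fibZ a.1.2.
have mY := measurable_fibY a.2.
rewrite resp_of_fiber /noise_law (product_measure1E (PX \x PZ)%E) //; last first.
  exact: measurableX.
rewrite [X in (X * _)%E](_ : _ = PX (fibX a.1.1) * PZ (fibZ a.1.2))%E.
  by rewrite /weight !EFinM !fineK //; exact: fin_num_measure.
exact: product_measure1E.
Qed.

Lemma noise_law_resp (phi : pred resp) :
  noise_law PX PZ PY [set u | phi (resp_of u)] = (mass phi)%:E.
Proof.
rewrite /noise_law (measure_preimage_pred measurable_resp_fiber ((PX \x PZ) \x PY)%E).
rewrite /mass -sumEFin.
by apply: eq_bigr => a _; exact: noise_law_resp_fiber.
Qed.

Lemma qX_ge0 b : 0 <= qX b. Proof. exact/fine_ge0/measure_ge0. Qed.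
Lemma qZ_ge0 p : 0 <= qZ p. Proof. exact/fine_ge0/measure_ge0. Qed.
Lemma qY_ge0 g : 0 <= qY g. Proof. exact/fine_ge0/measure_ge0. Qed.

Lemma mass_ge0 phi : 0 <= mass phi.
Proof. by apply: sumr_ge0 => a _; rewrite !mulr_ge0 ?qX_ge0 ?qZ_ge0 ?qY_ge0. Qed.

Lemma sum_qX : \sum_b qX b = 1.
Proof. exact: (probability_fibers_sum1 (f := fX c) measurable_fibX). Qed.

Lemma sum_qZ : \sum_p qZ p = 1.
Proof.
exact: (probability_fibers_sum1 (f := fun t => (fZ x c t, fZ (~~ x) c t)) measurable_fibZ).
Qed.

Lemma sum_qY : \sum_g qY g = 1.
Proof.
exact: (probability_fibers_sum1 (f := fun t => [ffun z => fY z c t]) measurable_fibY).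
Qed.

Lemma mass_pairE phi : mass phi =
  \sum_(a1 : bool * (Z * Z)) \sum_(g : {ffun Z -> bool} | phi (a1, g))
    qX a1.1 * qZ a1.2 * qY g.
Proof. by rewrite /mass pair_big_dep; apply: eq_big => [[a1 g]|[a1 g] _]. Qed.

Lemma mass_split_XZ_Y phi (p12 : pred (bool * (Z * Z))) (p3 : pred {ffun Z -> bool}) :
  (forall a, phi a = p12 a.1 && p3 a.2) ->
  mass phi = (\sum_(a1 | p12 a1) qX a1.1 * qZ a1.2) * \sum_(g | p3 g) qY g.
Proof.
move=> phiE; rewrite mass_pairE mulr_suml (bigID p12) /= [X in _ + X]big1 ?addr0.
  apply: eq_bigr => a1 p12a1; rewrite mulr_sumr; apply: eq_bigl => g.
  by rewrite phiE /= p12a1.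
by move=> a1 /negbTE np12; apply: big1 => g; rewrite phiE /= np12.
Qed.

Lemma mass_split3 phi (p1 : pred bool) (p2 : pred (Z * Z)) (p3 : pred {ffun Z -> bool}) :
  (forall a, phi a = [&& p1 a.1.1, p2 a.1.2 & p3 a.2]) ->
  mass phi = (\sum_(b | p1 b) qX b) * (\sum_(p | p2 p) qZ p) * \sum_(g | p3 g) qY g.
Proof.
move=> phiE; rewrite (@mass_split_XZ_Y _ (fun a1 => p1 a1.1 && p2 a1.2) p3).
  congr (_ * _); rewrite mulr_suml.
  by under [RHS]eq_bigr => b _ do rewrite mulr_sumr; rewrite pair_big_dep.
by move=> a; rewrite phiE andbA.
Qed.

Lemma mass_split_Z_Y phi (psi : Z * Z -> pred {ffun Z -> bool}) :
  (forall a, phi a = psi a.1.2 a.2) ->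
  mass phi = \sum_p qZ p * \sum_(g | psi p g) qY g.
Proof.
move=> phiE; rewrite mass_pairE -[RHS]mul1r -sum_qX mulr_suml.
under [RHS]eq_bigr => b _ do rewrite mulr_sumr; rewrite pair_big /=.
apply: eq_bigr => a1 _; rewrite !mulr_sumr.
by apply: eq_big => [g|g _]; rewrite ?phiE ?mulrA.
Qed.

Definition Zval (a : resp) : Z := if a.1.1 == x then a.1.2.1 else a.1.2.2.

Definition Xis (b : bool) : pred resp := fun a => a.1.1 == b.
Definition Zis (z : Z) : pred resp := fun a => Zval a == z.
Definition Yis (y : bool) : pred resp := fun a => a.2 (Zval a) == y.
Definition Yx_is (y : bool) : pred resp := fun a => a.2 a.1.2.1 == y.
Definition Yx'_is (y : bool) : pred resp := fun a => a.2 a.1.2.2 == y.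
Definition pand (phi psi : pred resp) : pred resp := fun a => phi a && psi a.

Definition pns (y : bool) : pred resp := pand (Yx_is y) (Yx'_is (~~ y)).

Definition qZx (z : Z) : R := \sum_(p : Z * Z | p.1 == z) qZ p.
Definition qZx' (z : Z) : R := \sum_(p : Z * Z | p.2 == z) qZ p.
Definition qYz (z : Z) (y : bool) : R := \sum_(g : {ffun Z -> bool} | g z == y) qY g.
Definition qpns (y : bool) (p : Z * Z) : R :=
  \sum_(g : {ffun Z -> bool} | (g p.1 == y) && (g p.2 == ~~ y)) qY g.

Lemma mass_predT : mass predT = 1.
Proof. by rewrite (@mass_split3 _ predT predT predT) // sum_qX sum_qZ sum_qY !mul1r. Qed.

Lemma mass_Xis b : mass (Xis b) = qX b.
Proof.
rewrite (@mass_split3 _ (pred1 b) predT predT); last by move=> a; rewrite !andbT.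
by rewrite sum_qZ sum_qY !mulr1 big_pred1_eq.
Qed.

Lemma mass_Z_X z : mass (pand (Zis z) (Xis x)) = qX x * qZx z.
Proof.
rewrite (@mass_split3 _ (pred1 x) (fun p => p.1 == z) predT); last first.
  move=> [[b [z1 z2]] g]; rewrite /pand /Zis /Xis /Zval /=.
  by case: (b == x); rewrite /= ?andbT ?andbF.
by rewrite sum_qY mulr1 big_pred1_eq.
Qed.

Lemma mass_Z_X' z : mass (pand (Zis z) (Xis (~~ x))) = qX (~~ x) * qZx' z.
Proof.
rewrite (@mass_split3 _ (pred1 (~~ x)) (fun p => p.2 == z) predT); last first.
  move=> [[b [z1 z2]] g]; rewrite /pand /Zis /Xis /Zval /=.
  by case: b; case: x; rewrite /= ?andbT ?andbF.
by rewrite sum_qY mulr1 big_pred1_eq.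
Qed.

(* Y_z is independent of the factual mediator: P(y, z | c) = P(z | c) P(Y_z = y). *)
Lemma mass_Y_Z y z : mass (pand (Yis y) (Zis z)) = mass (Zis z) * qYz z y.
Proof.
pose p12 (a1 : bool * (Z * Z)) := (if a1.1 == x then a1.2.1 else a1.2.2) == z.
rewrite (@mass_split_XZ_Y _ p12 (fun g => g z == y)); last first.
  move=> [[b [z1 z2]] g]; rewrite /pand /Zis /Yis /Zval /p12 /=.
  by have [->|] := eqVneq (if b == x then z1 else z2) z; rewrite ?andbT ?andbF.
by rewrite (@mass_split_XZ_Y (Zis z) p12 predT) ?sum_qY ?mulr1 // => a; rewrite andbT.
Qed.

Lemma mass_pns y : mass (pns y) = \sum_p qZ p * qpns y p.
Proof. exact: (@mass_split_Z_Y _ (fun p g => (g p.1 == y) && (g p.2 == ~~ y))). Qed.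

(* [mass] is a positive linear functional on indicator functions: a pointwise
   inequality between counts of satisfied events lifts to their masses. *)
Lemma mass_lin_le (ps qs : seq (pred resp)) :
  (forall a, \sum_(phi <- ps) ((phi a : bool)%:R : R) <= \sum_(phi <- qs) (phi a)%:R) ->
  \sum_(phi <- ps) mass phi <= \sum_(phi <- qs) mass phi.
Proof.
have massE l : \sum_(phi <- l) mass phi =
    \sum_a (\sum_(phi <- l) ((phi a : bool)%:R : R)) * weight a.
  rewrite /mass; under eq_bigr do rewrite big_mkcond; rewrite exchange_big /=.
  apply: eq_bigr => a _; rewrite mulr_suml; apply: eq_bigr => phi _.
  by case: (phi a); rewrite /= ?mul1r ?mul0r.
move=> countsP; rewrite !massE; apply: ler_sum => a _; apply: ler_wpM2r => //.
by rewrite !mulr_ge0 ?qX_ge0 ?qZ_ge0 ?qY_ge0.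
Qed.

Lemma mass_lin_eq (ps qs : seq (pred resp)) :
  (forall a, \sum_(phi <- ps) ((phi a : bool)%:R : R) = \sum_(phi <- qs) (phi a)%:R) ->
  \sum_(phi <- ps) mass phi = \sum_(phi <- qs) mass phi.
Proof. by move=> countsE; apply/le_anti/andP; split; apply: mass_lin_le => a; rewrite countsE. Qed.

(* Reduce a linear relation between masses to a finite check on response types. *)
Local Ltac by_counting y lem ps qs :=
  have := lem ps qs; rewrite !big_cons !big_nil ?addr0 ?addrA; apply;
  let b := fresh "b" in let z1 := fresh "z1" in let z2 := fresh "z2" in
  let g := fresh "g" in
  move=> [[b [z1 z2]] g];
  rewrite !big_cons !big_nil /pns /pand /Yx_is /Yx'_is /Yis /Xis /Zval /=;
  case: b; case: x; case: y; case: (g z1); case: (g z2); rewrite /=; lra.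

Lemma mass_Yx_split y : mass (Yx_is y) = mass (pns y) + mass (pand (Yx_is y) (Yx'_is y)).
Proof. by by_counting y mass_lin_eq [:: Yx_is y] [:: pns y; pand (Yx_is y) (Yx'_is y)]. Qed.

Lemma mass_Yx'_split y :
  mass (Yx'_is y) = mass (pand (Yx'_is y) (Yx_is (~~ y))) + mass (pand (Yx_is y) (Yx'_is y)).
Proof.
by by_counting y mass_lin_eq [:: Yx'_is y]
  [:: pand (Yx'_is y) (Yx_is (~~ y)); pand (Yx_is y) (Yx'_is y)].
Qed.

Lemma mass_Yx'N_split y :
  mass (Yx'_is (~~ y)) = mass (pns y) + mass (pand (Yx_is (~~ y)) (Yx'_is (~~ y))).
Proof.
by by_counting y mass_lin_eq [:: Yx'_is (~~ y)]
  [:: pns y; pand (Yx_is (~~ y)) (Yx'_is (~~ y))].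
Qed.

Lemma pns_lb_Yx_Yx' y : mass (Yx_is y) <= mass (pns y) + mass (Yx'_is y).
Proof. by by_counting y mass_lin_le [:: Yx_is y] [:: pns y; Yx'_is y]. Qed.

Lemma pns_lb_Y_Yx' y : mass (Yis y) <= mass (pns y) + mass (Yx'_is y).
Proof. by by_counting y mass_lin_le [:: Yis y] [:: pns y; Yx'_is y]. Qed.

Lemma pns_lb_Yx_Y y : mass (Yx_is y) <= mass (pns y) + mass (Yis y).
Proof. by by_counting y mass_lin_le [:: Yx_is y] [:: pns y; Yis y]. Qed.

Lemma pns_ub_Yx y : mass (pns y) <= mass (Yx_is y).
Proof. by by_counting y mass_lin_le [:: pns y] [:: Yx_is y]. Qed.

Lemma pns_ub_Yx'N y : mass (pns y) <= mass (Yx'_is (~~ y)).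
Proof. by by_counting y mass_lin_le [:: pns y] [:: Yx'_is (~~ y)]. Qed.

Lemma pns_ub_obs y :
  mass (pns y) <= mass (pand (Yis y) (Xis x)) + mass (pand (Yis (~~ y)) (Xis (~~ x))).
Proof.
by by_counting y mass_lin_le [:: pns y]
  [:: pand (Yis y) (Xis x); pand (Yis (~~ y)) (Xis (~~ x))].
Qed.

Lemma pns_ub_mixed y : mass (pns y) + mass (Yx'_is y) <=
  mass (Yx_is y) + mass (pand (Yis y) (Xis (~~ x))) + mass (pand (Yis (~~ y)) (Xis x)).
Proof.
by by_counting y mass_lin_le [:: pns y; Yx'_is y]
  [:: Yx_is y; pand (Yis y) (Xis (~~ x)); pand (Yis (~~ y)) (Xis x)].
Qed.

Lemma mass_sub (phi psi : pred resp) : (forall a, phi a -> psi a) -> mass phi <= mass psi.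
Proof.
by move=> sub; apply: ler_sum_sub => // a; rewrite !mulr_ge0 ?qX_ge0 ?qZ_ge0 ?qY_ge0.
Qed.

Lemma qZ_le_marginals p : qZ p <= qZx p.1 /\ qZ p <= qZx' p.2.
Proof.
have -> : qZ p = \sum_(q | q == p) qZ q by rewrite big_pred1_eq.
by split; apply: ler_sum_sub => [q|q /eqP ->] //; exact: qZ_ge0.
Qed.

Lemma qpns_le_marginals y p : qpns y p <= qYz p.1 y /\ qpns y p <= qYz p.2 (~~ y).
Proof. by split; apply: ler_sum_sub => [g|g /andP[]] //; exact: qY_ge0. Qed.

Lemma qpns_diag y z : qpns y (z, z) = 0.
Proof. by rewrite /qpns big_pred0 // => g /=; case: (g z); case: y. Qed.

Section MediatorBound.
Hypotheses (qx_gt0 : 0 < qX x) (qx'_gt0 : 0 < qX (~~ x)).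

Lemma cond_Y_Z y z : mass (Zis z) != 0 ->
  mass (pand (Yis y) (Zis z)) / mass (Zis z) = qYz z y.
Proof. by move=> nz; rewrite mass_Y_Z mulrC mulKf. Qed.

Lemma cond_Z_X z : mass (pand (Zis z) (Xis x)) / mass (Xis x) = qZx z.
Proof. by rewrite mass_Z_X mass_Xis mulrC mulKf ?lt0r_neq0. Qed.

Lemma cond_Z_X' z : mass (pand (Zis z) (Xis (~~ x))) / mass (Xis (~~ x)) = qZx' z.
Proof. by rewrite mass_Z_X' mass_Xis mulrC mulKf ?lt0r_neq0. Qed.

Lemma qZ_null p : mass (Zis p.1) = 0 \/ mass (Zis p.2) = 0 -> qZ p = 0.
Proof.
have [le1 le2] := qZ_le_marginals p.
have ge1 : qX x * qZx p.1 <= mass (Zis p.1).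
  by rewrite -mass_Z_X; apply: mass_sub => a /andP[].
have ge2 : qX (~~ x) * qZx' p.2 <= mass (Zis p.2).
  by rewrite -mass_Z_X'; apply: mass_sub => a /andP[].
move=> null; apply/le_anti; rewrite qZ_ge0 andbT.
case: null => m0.
  by rewrite m0 pmulr_rle0 // in ge1; exact: le_trans ge1.
by rewrite m0 pmulr_rle0 // in ge2; exact: le_trans ge2.
Qed.

Lemma pns_term_le y p : qZ p * qpns y p <=
    Num.min (mass (pand (Yis y) (Zis p.1)) / mass (Zis p.1))
            (mass (pand (Yis (~~ y)) (Zis p.2)) / mass (Zis p.2))
  * Num.min (mass (pand (Zis p.1) (Xis x)) / mass (Xis x))
            (mass (pand (Zis p.2) (Xis (~~ x))) / mass (Xis (~~ x))).
Proof.
rewrite cond_Z_X cond_Z_X'.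
have minY_ge0 : 0 <= Num.min (mass (pand (Yis y) (Zis p.1)) / mass (Zis p.1))
                             (mass (pand (Yis (~~ y)) (Zis p.2)) / mass (Zis p.2)).
  by rewrite le_min !divr_ge0 ?mass_ge0.
have minZ_ge0 : 0 <= Num.min (qZx p.1) (qZx' p.2).
  by rewrite le_min !sumr_ge0 // => q _; exact: qZ_ge0.
have [m1|n1] := eqVneq (mass (Zis p.1)) 0.
  by rewrite (qZ_null (or_introl m1)) mul0r mulr_ge0.
have [m2|n2] := eqVneq (mass (Zis p.2)) 0.
  by rewrite (qZ_null (or_intror m2)) mul0r mulr_ge0.
have [qZ1 qZ2] := qZ_le_marginals p; have [qY1 qY2] := qpns_le_marginals y p.
rewrite !cond_Y_Z // mulrC; apply: ler_pM; rewrite ?qZ_ge0 ?le_min ?qZ1 ?qZ2 ?qY1 ?qY2 //.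
by apply: sumr_ge0 => g _; exact: qY_ge0.
Qed.

(* The mediator bound: summing over pairs z != z' (pairs z = z' carry no pns mass). *)
Lemma pns_ub_mediator y : mass (pns y) <= \sum_z \sum_(z' | z' != z)
    Num.min (mass (pand (Yis y) (Zis z)) / mass (Zis z))
            (mass (pand (Yis (~~ y)) (Zis z')) / mass (Zis z'))
  * Num.min (mass (pand (Zis z) (Xis x)) / mass (Xis x))
            (mass (pand (Zis z') (Xis (~~ x))) / mass (Xis (~~ x))).
Proof.
rewrite mass_pns pair_big_dep /= (bigID (fun p : Z * Z => p.2 != p.1)) /=.
rewrite [X in _ + X]big1 ?addr0 => [|[z1 z2] /negPn /eqP /= ->]; last first.
  by rewrite qpns_diag mulr0.
by apply: ler_sum => p _; exact: pns_term_le.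
Qed.
End MediatorBound.

Variable pC : C -> R.
Local Notation Pr := (Pr pC PX PZ PY).
Local Notation cPr := (cPr pC PX PZ PY).
Local Notation Ycf := (evYcf (Z := Z) fZ fY).
Local Notation Y_ := (evY fX fZ fY).
Local Notation X_ := (evX fX).
Local Notation Z_ := (evZ fX fZ).

Definition represents (A : event C TX TZ TY) (phi : pred resp) : Prop :=
  forall u, A c u <-> phi (resp_of u).

Lemma represents_restrict A phi : represents A phi -> represents (evI A (evC c)) phi.
Proof. by move=> repA u; rewrite -repA; split => [[]|]. Qed.

Lemma represents_I A B phi psi :
  represents A phi -> represents B psi -> represents (evI A B) (pand phi psi).
Proof.
move=> repA repB u; rewrite /pand /evI.
by split => [[/repA -> /repB ->] //|/andP[/repA ? /repB ?]].
Qed.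

Lemma represents_Ycf_x y : represents (Ycf x y) (Yx_is y).
Proof. by move=> u; rewrite /evYcf /Ycf /Yx_is /= ffunE; exact: (rwP eqP). Qed.

Lemma represents_Ycf_x' y : represents (Ycf (~~ x) y) (Yx'_is y).
Proof. by move=> u; rewrite /evYcf /Ycf /Yx'_is /= ffunE; exact: (rwP eqP). Qed.

Lemma represents_X b : represents (X_ b) (Xis b).
Proof. by move=> u; rewrite /evX /Xv /Xis /=; exact: (rwP eqP). Qed.

Lemma represents_Z z : represents (Z_ z) (Zis z).
Proof.
move=> u; rewrite /evZ /Zv /Xv /Zis /Zval /=.
by case: (fX c u.1.1); case: x; exact: (rwP eqP).
Qed.

Lemma represents_Y y : represents (Y_ y) (Yis y).
Proof.
move=> u; rewrite /evY /Yv /Zv /Xv /Yis /Zval /= ffunE.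
by case: (fX c u.1.1); case: x; exact: (rwP eqP).
Qed.

Lemma Pr_represents E phi :
  (forall c' u, E c' u -> c' = c) -> represents E phi -> Pr E = pC c * mass phi.
Proof.
move=> suppE repE; rewrite /Pr (bigD1 c) //= big1 ?addr0 => [|c' c'c].
  have -> : E c = [set u | phi (resp_of u)].
    by apply/funext => u; apply/propext; exact: repE.
  by rewrite noise_law_resp.
have -> : E c' = set0.
  by apply/funext => u; apply/propext; split => // /suppE eq_c; rewrite eq_c eqxx in c'c.
by rewrite /noise_law (measure0 ((PX \x PZ) \x PY)%E) mulr0.
Qed.

Lemma Pr_ctx : Pr (evC c) = pC c.
Proof. by rewrite (Pr_represents (phi := predT)) // mass_predT mulr1. Qed.

Lemma Pr_X_ctx b : Pr (evI (X_ b) (evC c)) = pC c * qX b.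
Proof.
rewrite -mass_Xis (Pr_represents (phi := Xis b)) //; last first.
  exact/represents_restrict/represents_X.
by move=> c' u [].
Qed.

Section Conditioning.
Hypothesis pc_gt0 : 0 < pC c.

Lemma cPr_ctx A phi : represents A phi -> cPr A (evC c) = mass phi.
Proof.
move=> repA; rewrite /cPr Pr_ctx (Pr_represents (phi := phi)); last first.
- exact: represents_restrict.
- by move=> c' u [].
by rewrite mulrC mulKf ?lt0r_neq0.
Qed.

Lemma cPr_cond A B phi psi : represents A phi -> represents B psi ->
  cPr A (evI B (evC c)) = mass (pand phi psi) / mass psi.
Proof.
move=> repA repB; rewrite /cPr.
rewrite (Pr_represents (phi := pand phi psi)); last first.
- exact/represents_I/represents_restrict.
- by move=> c' u [_ []].
rewrite (Pr_represents (phi := psi)); last first.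
- exact: represents_restrict.
- by move=> c' u [].
by rewrite -mulf_div divff ?lt0r_neq0 // mul1r.
Qed.

Variable y : bool.

Local Notation pns_c := (cPr (evI (Ycf x y) (Ycf (~~ x) (~~ y))) (evC c)).

Lemma objective_affine beta gamma theta delta :
  beta * pns_c
  + gamma * cPr (evI (Ycf x y) (Ycf (~~ x) y)) (evC c)
  + theta * cPr (evI (Ycf x (~~ y)) (Ycf (~~ x) (~~ y))) (evC c)
  + delta * cPr (evI (Ycf (~~ x) y) (Ycf x (~~ y))) (evC c)
  = (gamma - delta) * cPr (Ycf x y) (evC c) + delta * cPr (Ycf (~~ x) y) (evC c)
    + theta * cPr (Ycf (~~ x) (~~ y)) (evC c) + (beta - gamma - theta + delta) * pns_c.
Proof.
rewrite !(cPr_ctx (represents_I (represents_Ycf_x _) (represents_Ycf_x' _))).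
rewrite (cPr_ctx (represents_I (represents_Ycf_x' _) (represents_Ycf_x _))).
rewrite (cPr_ctx (represents_Ycf_x _)) !(cPr_ctx (represents_Ycf_x' _)).
rewrite mass_Yx'N_split (mass_Yx'_split y) mass_Yx_split /pns; lra.
Qed.

Lemma pns_lower_bound :
  Num.max 0 (Num.max (cPr (Ycf x y) (evC c) - cPr (Ycf (~~ x) y) (evC c))
    (Num.max (cPr (Y_ y) (evC c) - cPr (Ycf (~~ x) y) (evC c))
             (cPr (Ycf x y) (evC c) - cPr (Y_ y) (evC c)))) <= pns_c.
Proof.
rewrite (cPr_ctx (represents_I (represents_Ycf_x _) (represents_Ycf_x' _))).
rewrite (cPr_ctx (represents_Ycf_x _)) (cPr_ctx (represents_Ycf_x' _)).
rewrite (cPr_ctx (represents_Y _)) !ge_max mass_ge0 !lerBlDr.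
by rewrite pns_lb_Yx_Yx' pns_lb_Y_Yx' pns_lb_Yx_Y.
Qed.

(* The upper bound U of Theorem 3; its fourth term rearranges [pns_ub_mixed]. *)
Lemma pns_upper_bound :
  0 < Pr (evI (X_ x) (evC c)) -> 0 < Pr (evI (X_ (~~ x)) (evC c)) ->
  pns_c <= Num.min (cPr (Ycf x y) (evC c)) (Num.min (cPr (Ycf (~~ x) (~~ y)) (evC c))
     (Num.min (cPr (evI (Y_ y) (X_ x)) (evC c) + cPr (evI (Y_ (~~ y)) (X_ (~~ x))) (evC c))
     (Num.min (cPr (Ycf x y) (evC c) - cPr (Ycf (~~ x) y) (evC c)
               + cPr (evI (Y_ y) (X_ (~~ x))) (evC c) + cPr (evI (Y_ (~~ y)) (X_ x)) (evC c))
        (\sum_(z : Z) \sum_(z' : Z | z' != z)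
           Num.min (cPr (Y_ y) (evI (Z_ z) (evC c))) (cPr (Y_ (~~ y)) (evI (Z_ z') (evC c)))
         * Num.min (cPr (Z_ z) (evI (X_ x) (evC c))) (cPr (Z_ z') (evI (X_ (~~ x)) (evC c))))))).
Proof.
rewrite !Pr_X_ctx !pmulr_rgt0 // => qx_gt0 qx'_gt0.
rewrite (cPr_ctx (represents_I (represents_Ycf_x _) (represents_Ycf_x' _))).
rewrite (cPr_ctx (represents_Ycf_x _)) !(cPr_ctx (represents_Ycf_x' _)).
rewrite !(cPr_ctx (represents_I (represents_Y _) (represents_X _))).
under eq_bigr => z _ do under eq_bigr => z' _ do
  rewrite !(cPr_cond (represents_Y _) (represents_Z _))
          !(cPr_cond (represents_Z _) (represents_X _)).
have mixed := pns_ub_mixed y.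
rewrite !le_min pns_ub_Yx pns_ub_Yx'N pns_ub_obs pns_ub_mediator //= andbT.
lra.
Qed.
End Conditioning.
End ResponseTypes.

Lemma affine_bounds (R : realDomainType) (W sigma p L U : R) : L <= p -> p <= U ->
  (sigma < 0 -> W + sigma * U <= W + sigma * p <= W + sigma * L) /\
  (0 < sigma -> W + sigma * L <= W + sigma * p <= W + sigma * U).
Proof.
move=> Lp pU; split => s0; rewrite !lerD2l.
  by rewrite !ler_nM2l // Lp pU.
by rewrite !ler_pM2l // Lp pU.
Qed.

Theorem theorem3 (R : realType) (C Z : finType)
  (dX dZ dY : measure_display)
  (TX : measurableType dX) (TZ : measurableType dZ) (TY : measurableType dY)
  (pC : C -> R) (PX : probability TX R) (PZ : probability TZ R)
  (PY : probability TY R)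
  (fX : C -> TX -> bool) (fZ : bool -> C -> TZ -> Z) (fY : Z -> C -> TY -> bool)
  (hpC : is_pmf pC) (hmeas : scm_measurable fX fZ fY)
  (c : C) (x y : bool) (beta gamma theta delta : R) :
  let x' := ~~ x in
  let y' := ~~ y in
  let P := Pr pC PX PZ PY in
  let cP := cPr pC PX PZ PY in
  let X_ := evX fX in
  let Z_ := evZ fX fZ in
  let Y_ := evY fX fZ fY in
  let Ycf_ := evYcf (Z := Z) fZ fY in
  0 < P (evC c) ->
  0 < P (evI (X_ x) (evC c)) ->
  0 < P (evI (X_ x') (evC c)) ->
  let f := beta * cP (evI (Ycf_ x y) (Ycf_ x' y')) (evC c)
         + gamma * cP (evI (Ycf_ x y) (Ycf_ x' y)) (evC c)
         + theta * cP (evI (Ycf_ x y') (Ycf_ x' y')) (evC c)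
         + delta * cP (evI (Ycf_ x' y) (Ycf_ x y')) (evC c) in
  let sigma := beta - gamma - theta + delta in
  let Pyx := cP (Ycf_ x y) (evC c) in
  let Pyx' := cP (Ycf_ x' y) (evC c) in
  let Py'x' := cP (Ycf_ x' y') (evC c) in
  let Py := cP (Y_ y) (evC c) in
  let W := (gamma - delta) * Pyx + delta * Pyx' + theta * Py'x' in
  let L := Num.max 0 (Num.max (Pyx - Pyx') (Num.max (Py - Pyx') (Pyx - Py))) in
  let U := Num.min Pyx (Num.min Py'x'
             (Num.min (cP (evI (Y_ y) (X_ x)) (evC c) + cP (evI (Y_ y') (X_ x')) (evC c))
             (Num.min (Pyx - Pyx' + cP (evI (Y_ y) (X_ x')) (evC c)
                                  + cP (evI (Y_ y') (X_ x)) (evC c))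
               (\sum_(z : Z) \sum_(z' : Z | z' != z)
                  Num.min (cP (Y_ y) (evI (Z_ z) (evC c)))
                          (cP (Y_ y') (evI (Z_ z') (evC c)))
                  * Num.min (cP (Z_ z) (evI (X_ x) (evC c)))
                            (cP (Z_ z') (evI (X_ x') (evC c))))))) in
  (sigma < 0 -> W + sigma * U <= f <= W + sigma * L) /\
  (0 < sigma -> W + sigma * L <= f <= W + sigma * U).
Proof.
move=> x' y' P cP X_ Z_ Y_ Ycf_ hC hX hX' f sigma Pyx Pyx' Py'x' Py W L U.
have pc_gt0 : 0 < pC c by move: hC; rewrite /P (Pr_ctx PX PZ PY hmeas c x).
have -> : f = W + sigma * cP (evI (Ycf_ x y) (Ycf_ x' y')) (evC c).
  exact: (objective_affine PX PZ PY hmeas x pc_gt0).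
apply: affine_bounds; first exact: (pns_lower_bound PX PZ PY hmeas x pc_gt0).
exact: (pns_upper_bound hmeas pc_gt0).
Qed.
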